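(* Let $r\ge 0$ and $k\ge r$ be integers and let $t$ be an integer with $2\le t\le r+1$. Let $\Omega=\lfloor tr/(t-1)\rfloor+1$, $a=t(r+1)+(1-t)\Omega$, $b=t-1-a$. Then \[t\binom{k+2-(r+1)}{2}-b\binom{k+2-\Omega}{2}-a\binom{k+2-(\Omega+1)}{2}=\binom{k+2}{2}-\binom{r+2}{2}-\sum_{j=1}^{k-r}(r+j+1-j\,t)_+ .\]
   Context: $(x)_+=\max(x,0)$; an empty sum is $0$. Binomial coefficients follow the convention $\binom{m}{2}=m(m-1)/2$ for integers $m\ge 2$ and $\binom{m}{2}=0$ for $m<2$. *)

From mathcomp Require Import all_boot all_order all_algebra.
Set Implicit Arguments. Unset Strict Implicit. Unset Printing Implicit Defensive.
Import Order.TTheory GRing.Theory Num.Theory.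
Local Open Scope ring_scope.

Definition binom2 (m : int) : int :=
  if (0 <= m) then ('C(`|m|%N, 2))%:Z else 0.

Definition pos_part (x : int) : int := Num.max x 0.

From mathcomp Require Import all_boot all_order all_algebra zify.
Import Order.TTheory GRing.Theory Num.Theory.
Local Open Scope ring_scope.

(* Both sides vanish at k = r, so it suffices to compare first differences in
   k.  Since binom2 (m + 1) - binom2 m = (m)_+, the difference of the left side
   at k = r + j is a piecewise linear function of j with a single break at
   q = r %/ (t - 1): writing r = q (t - 1) + rr, it equals t j for j <= q and
   r + j + 1 for j > q, because b + a = t - 1 and a = rr + 1.  That is exactly
   (r + j + 1) - (r + j + 1 - j t)_+, the difference of the right side. *)

Lemma pos_part_id (x : int) : 0 <= x -> pos_part x = x.
Proof. by move=> x_ge0; rewrite /pos_part max_l. Qed.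

Lemma pos_part_eq0 (x : int) : x <= 0 -> pos_part x = 0.
Proof. by move=> x_le0; rewrite /pos_part max_r. Qed.

Lemma binom2_le1 (m : int) : m <= 1 -> binom2 m = 0.
Proof. by rewrite /binom2; case: m => [[|[|n]]|n]. Qed.

Lemma binom2D1 (m : int) : binom2 (m + 1) = binom2 m + pos_part m.
Proof.
case: m => [n|n]; last by rewrite pos_part_eq0 // /binom2; case: n.
by rewrite pos_part_id // /binom2 /= -PoszD addn1 binS bin1 PoszD addrC.
Qed.

Lemma divn_mulSl (s r : nat) : (0 < s)%N -> (s.+1 * r %/ s = r + r %/ s)%N.
Proof. by move=> s_gt0; rewrite mulSn divnDr ?dvdn_mulr // mulKn // addnC. Qed.

Section FirstDifferences.

Variables (s q rr r : nat).
Hypotheses (rr_lt_s : (rr < s)%N) (r_eq : r = (q * s + rr)%N).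

Lemma first_difference_eq (j : nat) :
  s.+1%:Z * pos_part (j%:Z + 1) - (s%:Z - rr%:Z - 1) * pos_part (j%:Z + (1 - q%:Z))
    - (rr%:Z + 1) * pos_part (j%:Z - q%:Z)
  = pos_part (j%:Z + (r%:Z + 2)) - pos_part (r%:Z + j.+1%:Z + 1 - j.+1%:Z * s.+1%:Z).
Proof.
rewrite (pos_part_id (j%:Z + 1)) ?(pos_part_id (j%:Z + (r%:Z + 2))); try lia.
have [j_lt_q | q_le_j] := ltnP j q.
- have js_le_qs : (j.+1 * s <= q * s)%N by rewrite leq_mul2r j_lt_q orbT.
  rewrite (pos_part_id (_ - _ * _)); last nia.
  by rewrite !pos_part_eq0; nia.
- have qs_lt_js : (q.+1 * s <= j.+1 * s)%N by rewrite leq_mul2r ltnS q_le_j orbT.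
  rewrite (pos_part_eq0 (_ - _ * _)); last nia.
  by rewrite !pos_part_id; nia.
Qed.

Lemma partial_sum_eq (n : nat) :
  s.+1%:Z * binom2 (n%:Z + 1) - (s%:Z - rr%:Z - 1) * binom2 (n%:Z + (1 - q%:Z))
    - (rr%:Z + 1) * binom2 (n%:Z - q%:Z)
  = binom2 (n%:Z + (r%:Z + 2)) - binom2 (r%:Z + 2)
    - \sum_(1 <= j < n.+1) pos_part (r%:Z + j%:Z + 1 - j%:Z * s.+1%:Z).
Proof.
elim: n => [|n IHn].
  by rewrite big_geq // !add0r subrr sub0r !binom2_le1 ?mulr0 ?subr0 //; lia.
have binom2S (x : int) : binom2 (n.+1%:Z + x) = binom2 (n%:Z + x) + pos_part (n%:Z + x).
  by rewrite -binom2D1; congr binom2; lia.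
rewrite big_nat_recr //= !binom2S !(mulrDr _ (binom2 _)).
(* lia does not see the sum as an [int] term, so it is abstracted first *)
move: (first_difference_eq n) IHn; move: (\sum_(1 <= j < n.+1) _) => sum_n; lia.
Qed.

End FirstDifferences.

Theorem lemma4p4 (r k t : nat) (hrk : (r <= k)%N) (ht2 : (2 <= t)%N)
  (htr : (t <= r.+1)%N) :
  let Omega : int := ((t * r) %/ (t - 1))%N.+1%:Z in
  let a : int := (t%:Z) * (r%:Z + 1) + (1 - t%:Z) * Omega in
  let b : int := t%:Z - 1 - a in
  (t%:Z) * binom2 (k%:Z + 2 - (r%:Z + 1)) - b * binom2 (k%:Z + 2 - Omega)
    - a * binom2 (k%:Z + 2 - (Omega + 1))
  = binom2 (k%:Z + 2) - binom2 (r%:Z + 2)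
    - \sum_(1 <= j < (k - r).+1) pos_part (r%:Z + j%:Z + 1 - j%:Z * t%:Z).
Proof.
case: t ht2 htr => [|s] // s_gt0 _ Omega a b.
have r_eq := divn_eq r s; have rr_lt_s := ltn_pmod r s_gt0.
have Omega_eq : Omega = (r + r %/ s + 1)%N%:Z.
  by rewrite /Omega subn1 divn_mulSl //; lia.
have a_eq : a = (r %% s)%N%:Z + 1 by rewrite /a Omega_eq; nia.
rewrite /b a_eq Omega_eq.
apply: etrans (etrans (partial_sum_eq _ _ _ _ rr_lt_s r_eq (k - r)) _).
- by congr (_ * binom2 _ - _ * binom2 _ - _ * binom2 _); lia.
- by congr (binom2 _ - _ - _); lia.
Qed.
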